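(* Let $1\le k<r$ and let $T_k$ be a single-vertex-bag weighted threshold matrix on $v_k,\dots,v_r$ with vertex weights $p^{(k)}_i$ ($k\le i\le r$) and edge weights $\epsilon^{(k)}_{i,j}$ ($k\le i<j\le r$, $j$ even). Set $\epsilon^{(k)}_{k,k+1}=0$ if $k+1$ is odd. Suppose that $p^{(k)}_k=p^{(k)}_{k+1}$ and $\epsilon^{(k)}_{k,j}=\epsilon^{(k)}_{k+1,j}$ for every even $j$ with $k+1<j\le r$. Let $T_{k+1}$ be the single-vertex-bag weighted threshold matrix on $v_{k+1},\dots,v_r$ with (a) $p^{(k+1)}_i=p^{(k)}_i$ for $k+2\le i\le r$; (b) $p^{(k+1)}_{k+1}=p^{(k)}_k+\epsilon^{(k)}_{k,k+1}$; (c) $\epsilon^{(k+1)}_{i,j}=\epsilon^{(k)}_{i,j}$ for $k+1<i<j\le r$, $j$ even; (d) $\epsilon^{(k+1)}_{k+1,j}=\sqrt2\,\epsilon^{(k)}_{k+1,j}$ for $k+1<j\le r$, $j$ even. Then, as multisets, $\mathrm{Spec}(T_k)=\mathrm{Spec}(T_{k+1})\cup\{p^{(k)}_k-\epsilon^{(k)}_{k,k+1}\}$.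
   Context: A single-vertex-bag weighted threshold matrix on $v_k,\dots,v_r$ is the real symmetric matrix indexed by $v_k,\dots,v_r$ with diagonal entries $p_i$ (the vertex weights) and, for $i<j$, entry $\epsilon_{i,j}\ne 0$ at positions $(v_i,v_j),(v_j,v_i)$ if $j$ is even and entry $0$ if $j$ is odd (so $v_i$ and $v_j$, $i<j$, are adjacent iff $j$ is even; this is a threshold graph whose bags are singletons, the bag of index $i$ being a union-bag for $i$ odd and a join-bag for $i$ even). $\mathrm{Spec}$ denotes the multiset of eigenvalues, and $\cup$ of multisets adds multiplicities. *)

From mathcomp Require Import all_boot all_order all_algebra.
Set Implicit Arguments. Unset Strict Implicit. Unset Printing Implicit Defensive.
Import Order.TTheory GRing.Theory Num.Theory.
Local Open Scope ring_scope.

(* Row/column index a : 'I_(r - k + 1) stands for vertex v_(k + a). *)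
Definition swtm (R : ringType) (k r : nat) (p : nat -> R) (eps : nat -> nat -> R)
  : 'M[R]_(r - k + 1) :=
  \matrix_(a, b)
    let i := (k + a)%N in let j := (k + b)%N in
    if i == j then p i
    else if (i < j)%N then (if odd j then 0 else eps i j)
    else (if odd i then 0 else eps j i).

Definition swtm_weights (R : ringType) (k r : nat) (eps : nat -> nat -> R) : Prop :=
  forall i j, (k <= i)%N -> (i < j)%N -> (j <= r)%N -> ~~ odd j -> eps i j != 0.

(* Multiplicity of x in the spectrum (multiset of eigenvalues) of A:
   its multiplicity as a root of the characteristic polynomial. *)
Definition spec_mult (R : fieldType) (n : nat) (A : 'M[R]_n) (x : R) : nat :=
  mup x (char_poly A).

From mathcomp Require Import all_boot all_order all_algebra.
From mathcomp Require Import ring zify.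
Import Order.TTheory GRing.Theory Num.Theory.
Set Implicit Arguments. Unset Strict Implicit. Unset Printing Implicit Defensive.
Local Open Scope ring_scope.

(* Vertices v_k and v_(k+1) are twins: they have the same weight and the same
   neighbours with the same edge weights.  In the basis e_k - e_(k+1),
   (e_k + e_(k+1)) / sqrt 2, e_(k+2), ..., e_r the matrix T_k becomes block
   diagonal: the antisymmetric vector is an eigenvector for p_k - eps_(k,k+1),
   and the remaining block is T_(k+1), the sqrt 2 rescaling the edges of the
   merged vertex.  Hence the characteristic polynomials differ by the factor
   X - (p_k - eps_(k,k+1)), which gives the spectra as multisets. *)

Lemma char_poly_castmx (R : nzRingType) m m' (e : m = m') (A : 'M[R]_m) :
  char_poly (castmx (e, e) A) = char_poly A.
Proof. by case: m' / e; rewrite castmx_id. Qed.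

Lemma char_poly_conj (R : comNzRingType) n (A B P Q : 'M[R]_n) :
  P *m Q = 1%:M -> A *m P = P *m B -> char_poly A = char_poly B.
Proof.
move=> PQ APB; pose P' := map_mx polyC P; pose Q' := map_mx polyC Q.
have detPQ : \det P' * \det Q' = 1.
  by rewrite -det_mulmx -map_mxM PQ map_mx1 det1.
have : char_poly_mx A *m P' = P' *m char_poly_mx B.
  by rewrite /char_poly_mx mulmxBl mulmxBr -!map_mxM APB mul_scalar_mx mul_mx_scalar.
move/(congr1 determinant); rewrite !det_mulmx -/(char_poly A) -/(char_poly B) => eq.
by rewrite -[LHS]mulr1 -detPQ mulrA eq mulrC mulrA (mulrC (\det Q')) detPQ mul1r.
Qed.

Lemma char_poly_row0_diag (R : comNzRingType) n (A : 'M[R]_n.+1) :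
  (forall j, j != ord0 -> A ord0 j = 0) ->
  char_poly A = ('X - (A ord0 ord0)%:P) * char_poly (row' ord0 (col' ord0 A)).
Proof.
move=> A0; rewrite /char_poly (expand_det_row _ ord0) big_ord_recl big1 => [|j _].
  by rewrite addr0 !mxE mulr1n /cofactor row'_col'_char_poly_mx /= expr0 mul1r.
by rewrite !mxE A0 // polyC0 subr0 mulr0n mul0r.
Qed.

Lemma sum_ord_deltal (R : nzSemiRingType) n i (X : nat -> R) : (i < n)%N ->
  \sum_(l < n) (i == val l)%:R * X l = X i.
Proof.
move=> ltin; rewrite (bigD1 (Ordinal ltin)) //= eqxx mul1r big1 ?addr0 // => l ne_li.
rewrite (_ : i == val l = false) ?mul0r //.
by apply: contraNF ne_li => /eqP il; apply/eqP/val_inj.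
Qed.

Lemma sum_ord_deltar (R : nzSemiRingType) n i (X : nat -> R) : (i < n)%N ->
  \sum_(l < n) X l * (val l == i)%:R = X i.
Proof.
move=> ltin; rewrite -(sum_ord_deltal X ltin).
by apply: eq_bigr => l _; rewrite eq_sym mulr_natl mulr_natr.
Qed.

Section TwinVertices.

Variables (R : comUnitRingType) (n : nat) (f g : nat -> nat -> R) (a e s : R).
Hypotheses (s_unit : s \is a GRing.unit) (s_sq : s * s = 2).
Hypotheses (f_sym : forall i j, f i j = f j i) (g_sym : forall i j, g i j = g j i).
Hypotheses (f00 : f 0 0 = a) (f11 : f 1 1 = a) (f01 : f 0 1 = e).
Hypothesis f_twin : forall j, (j < n)%N -> f 0 j.+2 = f 1 j.+2.
Hypotheses (g00 : g 0 0 = a + e) (g0S : forall j, (j < n)%N -> g 0 j.+1 = s * f 1 j.+2).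
Hypothesis gSS : forall i j, (i < n)%N -> (j < n)%N -> g i.+1 j.+1 = f i.+2 j.+2.

Definition twin_basis (i j : nat) : R :=
  match i, j with
  | 0, 0 => 1 | 0, 1 => s^-1 | 1, 0 => -1 | 1, 1 => s^-1
  | i.+2, j.+2 => (i == j)%:R
  | _, _ => 0
  end.

Definition twin_basis_inv (i j : nat) : R :=
  match i, j with
  | 0, 0 => 2^-1 | 0, 1 => - 2^-1 | 1, 0 => s^-1 | 1, 1 => s^-1
  | i.+2, j.+2 => (i == j)%:R
  | _, _ => 0
  end.

Definition twin_split (i j : nat) : R :=
  match i, j with
  | 0, 0 => a - e
  | i.+1, j.+1 => g i j
  | _, _ => 0
  end.

Lemma twin_basisK :
  \matrix_(i, j < n.+2) twin_basis i j *m \matrix_(i, j < n.+2) twin_basis_inv i j = 1%:M.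
Proof.
have half : 2^-1 = s^-1 * s^-1 by rewrite -s_sq invrM.
have sV_sq2 : s^-1 * s^-1 *+ 2 = 1 by rewrite -mulr_natr -s_sq mulrACA mulVr ?mulr1.
apply/matrixP => i j; rewrite !mxE !big_ord_recl.
under eq_bigr => l _ do rewrite !mxE !lift0.
rewrite !mxE /= half.
case: i => [[|[|i]] lti]; case: j => [[|[|j]] ltj] /=.
all: under eq_bigr => l _ do rewrite ?mul0r ?mulr0.
all: rewrite ?big1_eq; try ring: sV_sq2.
by rewrite (sum_ord_deltal (fun l => (l == j)%:R)) // !mul0r !add0r.
Qed.

Lemma twin_basis_conj :
  \matrix_(i, j < n.+2) f i j *m \matrix_(i, j < n.+2) twin_basis i j =
  \matrix_(i, j < n.+2) twin_basis i j *m \matrix_(i, j < n.+2) twin_split i j.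
Proof.
have sVs : s^-1 * s = 1 by rewrite mulVr.
have s_half : s^-1 *+ 2 = s by rewrite -mulr_natr -s_sq mulrA sVs mul1r.
apply/matrixP => i j; rewrite !mxE !big_ord_recl.
under eq_bigr => l _ do rewrite !mxE !lift0.
under [in RHS]eq_bigr => l _ do rewrite !mxE !lift0.
rewrite !mxE /= (_ : bump 0 0 = 1%N) // add0n.
case: i => [[|[|i]] lti]; case: j => [[|[|j]] ltj] /=.
all: try under eq_bigr => l _ do rewrite ?mul0r ?mulr0.
all: try under [in RHS]eq_bigr => l _ do rewrite ?mul0r ?mulr0.
all: rewrite ?big1_eq.
- by rewrite f00 f01; ring.
- by rewrite f00 f01 g00; ring.
- rewrite (sum_ord_deltar (fun l => f 0 l.+2)) // g0S // f_twin //; ring: sVs.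
- by rewrite f_sym f01 f11; ring.
- by rewrite f_sym f01 f11 g00; ring.
- rewrite (sum_ord_deltar (fun l => f 1 l.+2)) // g0S //; ring: sVs.
- by rewrite f_sym [f _ 1]f_sym f_twin //; ring.
- rewrite (sum_ord_deltal (fun l => g l.+1 0)) // g_sym g0S // f_sym [f _ 1]f_sym -f_twin //.
  ring: s_half.
- rewrite (sum_ord_deltar (fun l => f i.+2 l.+2)) //.
  by rewrite (sum_ord_deltal (fun l => g l.+1 j.+1)) // gSS //; ring.
Qed.

Lemma char_poly_twin :
  char_poly (\matrix_(i, j < n.+2) f i j) =
  ('X - (a - e)%:P) * char_poly (\matrix_(i, j < n.+1) g i j).
Proof.
rewrite (char_poly_conj twin_basisK twin_basis_conj) char_poly_row0_diag => [|j nz_j].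
  by rewrite !mxE; congr (_ * char_poly _); apply/matrixP => i j; rewrite !mxE !lift0.
by rewrite mxE; case: j nz_j => -[].
Qed.

End TwinVertices.

Definition swtm_fun (R : nzRingType) (k : nat) (p : nat -> R) (eps : nat -> nat -> R)
    (a b : nat) : R :=
  let i := (k + a)%N in let j := (k + b)%N in
  if i == j then p i
  else if (i < j)%N then (if odd j then 0 else eps i j)
  else (if odd i then 0 else eps j i).

Section ThresholdEntries.

Variables (R : nzRingType) (k : nat) (p : nat -> R) (eps : nat -> nat -> R).

Lemma swtm_castmx r m (E : (r - k + 1 = m)%N) :
  castmx (E, E) (swtm k r p eps) = \matrix_(a, b < m) swtm_fun k p eps a b.
Proof. by apply/matrixP => a b; rewrite castmxE !mxE. Qed.

Lemma swtm_fun_sym a b : swtm_fun k p eps a b = swtm_fun k p eps b a.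
Proof. by rewrite /swtm_fun; case: ltngtP => // ->. Qed.

Lemma swtm_fun_diag a : swtm_fun k p eps a a = p (k + a)%N.
Proof. by rewrite /swtm_fun eqxx. Qed.

Lemma swtm_fun_lt a b : (a < b)%N ->
  swtm_fun k p eps a b = if odd (k + b) then 0 else eps (k + a)%N (k + b)%N.
Proof. by move=> lt_ab; rewrite /swtm_fun ltn_add2l lt_ab ltn_eqF ?ltn_add2l. Qed.

Lemma swtm_funS a b : swtm_fun k p eps a.+1 b.+1 = swtm_fun k.+1 p eps a b.
Proof. by rewrite /swtm_fun !addnS !addSn. Qed.

End ThresholdEntries.

Lemma eq_swtm_fun (R : nzRingType) k r (p p' : nat -> R) (eps eps' : nat -> nat -> R) :
  (forall i, (k <= i)%N -> (i <= r)%N -> p' i = p i) ->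
  (forall i j, (k <= i)%N -> (i < j)%N -> (j <= r)%N -> ~~ odd j -> eps' i j = eps i j) ->
  forall a b, (k + a <= r)%N -> (k + b <= r)%N ->
  swtm_fun k p' eps' a b = swtm_fun k p eps a b.
Proof.
move=> eq_p eq_eps a b.
wlog le_ab : a b / (a <= b)%N => [wlog_ab|].
  by case: (leqP a b) => [|/ltnW] /wlog_ab; rewrite ?[swtm_fun _ _ _ b a]swtm_fun_sym; auto.
rewrite leq_eqVlt in le_ab; case/orP: le_ab => [/eqP <- le_kar _|lt_ab _ le_kbr].
  by rewrite !swtm_fun_diag eq_p ?leq_addr.
rewrite !swtm_fun_lt //; case: ifP => // /negbT even_kb.
by rewrite eq_eps ?leq_addr ?ltn_add2l.
Qed.

Lemma char_poly_swtm_twins (R : rcfType) k r (p p1 : nat -> R) (eps eps1 : nat -> nat -> R) :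
  (k < r)%N ->
  (odd k.+1 -> eps k k.+1 = 0) ->
  p k = p k.+1 ->
  (forall j, (k.+1 < j)%N -> (j <= r)%N -> ~~ odd j -> eps k j = eps k.+1 j) ->
  (forall i, (k.+2 <= i)%N -> (i <= r)%N -> p1 i = p i) ->
  p1 k.+1 = p k + eps k k.+1 ->
  (forall i j, (k.+1 < i)%N -> (i < j)%N -> (j <= r)%N -> ~~ odd j -> eps1 i j = eps i j) ->
  (forall j, (k.+1 < j)%N -> (j <= r)%N -> ~~ odd j -> eps1 k.+1 j = Num.sqrt 2 * eps k.+1 j) ->
  char_poly (swtm k r p eps) =
  ('X - (p k - eps k k.+1)%:P) * char_poly (swtm k.+1 r p1 eps1).
Proof.
move=> lt_kr eps_odd p_twin eps_twin p1_eq p1_merged eps1_eq eps1_merged.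
have [n def_n] : {n | r = (k + n).+1} by exists (r - k.+1)%N; lia.
have E : (r - k + 1 = n.+2)%N by lia.
have E1 : (r - k.+1 + 1 = n.+1)%N by lia.
rewrite -(char_poly_castmx E) -(char_poly_castmx E1) !swtm_castmx.
apply: (char_poly_twin (s := Num.sqrt 2)) => [||||||| j ltjn || j ltjn | i j ltin ltjn].
- by rewrite unitfE sqrtr_eq0 -ltNge ltr0n.
- by rewrite -expr2 sqr_sqrtr ?ler0n.
- exact: swtm_fun_sym.
- exact: swtm_fun_sym.
- by rewrite swtm_fun_diag addn0.
- by rewrite swtm_fun_diag addn1 p_twin.
- by rewrite swtm_fun_lt // addn0 addn1; case: ifP => // /eps_odd ->.
- rewrite !swtm_fun_lt // addn0 addn1; case: ifP => // /negbT even_j.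
  by rewrite eps_twin //; lia.
- by rewrite swtm_fun_diag addn0 p1_merged.
- rewrite swtm_funS !swtm_fun_lt // addn0; case: ifP => [_|/negbT even_j]; first by rewrite mulr0.
  by rewrite eps1_merged //; lia.
- by rewrite !swtm_funS; apply: (eq_swtm_fun (r := r)) => //; lia.
Qed.

Theorem mainTheorem4 (R : rcfType) (k r : nat)
  (p : nat -> R) (eps : nat -> nat -> R)
  (p1 : nat -> R) (eps1 : nat -> nat -> R) :
  (1 <= k)%N -> (k < r)%N ->
  swtm_weights k r eps ->
  (odd k.+1 -> eps k k.+1 = 0) ->
  p k = p k.+1 ->
  (forall j, (k.+1 < j)%N -> (j <= r)%N -> ~~ odd j -> eps k j = eps k.+1 j) ->
  (* (a) *) (forall i, (k.+2 <= i)%N -> (i <= r)%N -> p1 i = p i) ->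
  (* (b) *) p1 k.+1 = p k + eps k k.+1 ->
  (* (c) *) (forall i j, (k.+1 < i)%N -> (i < j)%N -> (j <= r)%N -> ~~ odd j ->
               eps1 i j = eps i j) ->
  (* (d) *) (forall j, (k.+1 < j)%N -> (j <= r)%N -> ~~ odd j ->
               eps1 k.+1 j = Num.sqrt 2 * eps k.+1 j) ->
  forall x : R,
    spec_mult (swtm k r p eps) x =
    addn (spec_mult (swtm k.+1 r p1 eps1) x) (x == p k - eps k k.+1).
Proof.
move=> _ lt_kr _ eps_odd p_twin eps_twin p1_eq p1_merged eps1_eq eps1_merged x.
rewrite /spec_mult (char_poly_swtm_twins lt_kr eps_odd p_twin eps_twin p1_eq p1_merged
  eps1_eq eps1_merged).
rewrite mupM ?monic_neq0 ?char_poly_monic ?monicXsubC // addnC.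
by rewrite -[_ - _%:P]expr1 mup_XsubCX eq_sym; case: eqP.
Qed.
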